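(* Let $N,k\ge 10$, let $(X,T)$ be a free Borel $\mathbb{Z}^d$ system with $d>1$, let $0<\delta<1$, and let $r_1<r_2<\cdots$ be natural numbers with $24\sum_{j<l}r_j<\delta r_l$ for all $l$ and $r_1>20k+12Nk/\delta$. Suppose $B_1,B_2,\dots\subseteq X$ are Borel sets such that (i) every connected component of $B_j$ is a coconnected $Nk$-grid union which is a $(1+\delta)$-almost cube of side length $r_j$; (ii) every $x\in X$ lies in some $B_i$; (iii) if $C,D$ are distinct connected components of $B_i$ and $B_j$ respectively then $\partial^{10k}C\cap\partial^{10k}D=\emptyset$. Then for every $i$ and every connected component $C$ of $B_i$, the set $C\setminus\bigcup_{D\in Z}D$ can be tiled by almost $k$-boxes, where $Z$ is the set of connected components $D$ of $B_j$, $j<i$, with $D\subseteq C$.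
   Context: A Borel $\mathbb{Z}^d$ system $(X,T)$ is a standard Borel space with a $\mathbb{Z}^d$-action by Borel automorphisms; free means $T^\gamma x\ne x$ for $\gamma\ne\bar 0$. $X$ is viewed as a graph with $x\sim T^{\pm\epsilon^i}(x)$; connected components of $B\subseteq X$ refer to the induced subgraph. A subset $C$ of the orbit of $x$ is identified (up to translation) with $\{\gamma:T^\gamma x\in C\}\subseteq\mathbb{Z}^d$, and translation-invariant properties (being a grid union, being tiled by boxes, etc.) are read through this identification. $\partial^nB=T^{[-n,n]^d}(B)\setminus B$ with $T^F(B)=\bigcup_{\gamma\in F}T^\gamma(B)$. An $M$-grid union is $B=\gamma+C+[1,M]^d\subseteq\mathbb{Z}^d$ with $C\subseteq M\mathbb{Z}^d$, $B$ and $\mathbb{Z}^d\setminus B$ connected. Coconnected: complement in $\mathbb{Z}^d$ connected. An $\alpha$-almost cube of side length $s$ is a finite $F$ with $S\subseteq F\subseteq S'$ for concentric cubes of side lengths $s$ and $\alpha s$. An almost $k$-box is a box (product of integer intervals) all of whose side lengths lie in $[k,2k]$ with at most one side length different from $k$. *)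

From HB Require Import structures.
From mathcomp Require Import all_boot all_order all_algebra.
From mathcomp Require Import all_classical all_reals all_analysis.
From mathcomp Require Import Rstruct.
Set Implicit Arguments. Unset Strict Implicit. Unset Printing Implicit Defensive.
Import Order.TTheory GRing.Theory Num.Theory.
Local Open Scope classical_set_scope.
Local Open Scope ring_scope.

Definition Rr : realType := Rdefinitions.R.

Notation Zd d := 'rV[int]_d.
Definition coord {d} (v : Zd d) (i : 'I_d) : int := v ord0 i.
Definition unitv {d} (i : 'I_d) : Zd d := delta_mx ord0 i.

Inductive pconn {V : Type} (adj : V -> V -> Prop) (A : set V) : V -> V -> Prop :=
| pconn_refl x : A x -> pconn adj A x x
| pconn_step x y z : pconn adj A x y -> adj y z -> A z -> pconn adj A x z.

Definition adjZ {d} (a b : Zd d) : Prop :=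
  exists i : 'I_d, b = a + unitv i \/ b = a - unitv i.

Definition Zconnected {d} (S : set (Zd d)) : Prop :=
  forall a b, S a -> S b -> pconn adjZ S a b.

Definition coconnected {d} (S : set (Zd d)) : Prop := Zconnected (~` S).

Definition grid_union {d} (M : nat) (B : set (Zd d)) : Prop :=
  exists (gamma : Zd d) (C : set (Zd d)),
    (forall c, C c -> forall i, (M%:Z %| coord c i)%Z) /\
    B = [set v | exists c u, C c /\ (forall i, 1 <= coord u i <= M%:Z) /\
                             v = gamma + c + u] /\
    Zconnected B /\ Zconnected (~` B).

Definition cubeR {d} (c : 'I_d -> Rr) (l : Rr) : set (Zd d) :=
  [set v | forall i, c i - l / 2 <= (coord v i)%:~R < c i + l / 2].

Definition almost_cube {d} (alpha : Rr) (s : nat) (F : set (Zd d)) : Prop :=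
  finite_set F /\
  exists c : 'I_d -> Rr, cubeR c s%:R `<=` F /\ F `<=` cubeR c (alpha * s%:R).

(* boxes and almost k-boxes; side length = number of integer points *)
Definition box_of {d} (a b : 'I_d -> int) : set (Zd d) :=
  [set v | forall i, a i <= coord v i <= b i].

Definition almost_kbox {d} (k : nat) (Q : set (Zd d)) : Prop :=
  exists a b : 'I_d -> int,
    Q = box_of a b /\
    (forall i, k%:Z <= b i - a i + 1 <= (2 * k)%:Z) /\
    (forall i j, b i - a i + 1 != k%:Z -> b j - a j + 1 != k%:Z -> i = j).

Definition tileable_by_almost_kboxes {d} (k : nat) (S : set (Zd d)) : Prop :=
  exists P : set (set (Zd d)),
    (forall Q, P Q -> almost_kbox k Q) /\
    (forall Q Q', P Q -> P Q' -> Q <> Q' -> Q `&` Q' = set0) /\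
    S = [set v | exists Q, P Q /\ Q v].

(* standard Borel: Borel isomorphic to a Borel subset of R (Kuratowski) *)
Definition standard_borel {dX : measure_display} (X : measurableType dX) : Prop :=
  exists f : X -> measurableTypeR Rr,
    injective f /\ measurable_fun setT f /\
    (forall A : set X, measurable A -> measurable (f @` A)).

Definition borel_action {dX : measure_display} {X : measurableType dX} {d : nat}
    (T : Zd d -> X -> X) : Prop :=
  (forall x, T 0 x = x) /\
  (forall a b x, T (a + b) x = T a (T b x)) /\
  (forall g, measurable_fun setT (T g)).

Definition free_action {X : Type} {d} (T : Zd d -> X -> X) : Prop :=
  forall g x, T g x = x -> g = 0.

Definition adjX {X : Type} {d} (T : Zd d -> X -> X) (x y : X) : Prop :=
  exists i : 'I_d, y = T (unitv i) x \/ y = T (- unitv i) x.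

Definition component {X : Type} {d} (T : Zd d -> X -> X) (B C : set X) : Prop :=
  exists x, B x /\ C = [set y | pconn (adjX T) B x y].

Definition boundary {X : Type} {d} (T : Zd d -> X -> X) (n : nat) (B : set X) : set X :=
  [set y | exists g x, (forall i, `|coord g i| <= n%:Z) /\ B x /\ y = T g x] `\` B.

(* translation-invariant property P of subsets of Z^d read on a subset of an orbit *)
Definition on_orbit {X : Type} {d} (T : Zd d -> X -> X)
    (P : set (Zd d) -> Prop) (C : set X) : Prop :=
  exists x, (forall y, C y -> exists g, y = T g x) /\ P [set g | C (T g x)].

From Pilot Require Import Defs.
From HB Require Import structures.
From mathcomp Require Import all_boot all_order all_algebra.
From mathcomp Require Import all_classical all_reals all_analysis.
From mathcomp Require Import Rstruct.
From mathcomp Require Import zify ring.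
Import Order.TTheory GRing.Theory Num.Theory.
Local Open Scope classical_set_scope.
Local Open Scope ring_scope.
Set Implicit Arguments.

(* Read everything in the Z^d-picture of C, an M-grid union (M = N k) whose
   k-cells form the lattice of k-cubes of offset o.  Each earlier component
   inside C is an M-grid union S whose k-lattice is in general offset from o.
   Fatten the cells of S one direction at a time: in stage i+1 every cell is
   stretched in direction i, by pads of thickness between k and 2k, until it
   ends on the lattice of C.  After d stages the fattening F_d(S) is a union of
   k-cubes of C, and every point of F_(i+1)(S) \ F_i(S) lies in a box which
   is a pad in direction i and a k-cell in the other directions (of the lattice
   of C before i, of S after i): an almost k-box.  What is left of C outside
   the fattenings is tiled by the k-cubes of C.  All the new boxes stay within
   distance 2k of S, so the disjointness of the 10k-boundaries keeps them
   inside C and away from each other. *)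

(* [all_algebra] exports another [coord] (coordinates in a vector space). *)
Local Notation coord := Defs.coord.

Lemma dvdz_ler (n x : int) : 0 < x -> (n %| x)%Z -> n <= x.
Proof. by move=> x_gt0; rewrite dvdzE => /dvdn_leq; lia. Qed.

Lemma dvdz_small {n x : int} : (n %| x)%Z -> - n < x < n -> x = 0.
Proof.
move=> nx; have := dvdz_ler n x; have := dvdz_ler n (- x).
by rewrite rpredN nx; lia.
Qed.

Lemma dvdz_sub_offset {n o a b : int} :
  (n %| a - o)%Z -> (n %| b - o)%Z -> (n %| a - b)%Z.
Proof.
move=> na nb; have -> : a - b = (a - o) - (b - o) by ring.
exact: rpredB.
Qed.

Lemma cell_uniq {n o u u' x : int} : (n %| u - o)%Z -> (n %| u' - o)%Z ->
  u < x <= u + n -> u' < x <= u' + n -> u = u'.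
Proof.
move=> nu nu'; have := dvdz_small (dvdz_sub_offset nu nu'); lia.
Qed.

Lemma cell_sub_interval {n o u a b x y : int} :
  (n %| u - o)%Z -> (n %| a - o)%Z -> (n %| b - o)%Z ->
  u < x <= u + n -> u < y <= u + n -> a < x <= b -> a < y <= b.
Proof.
move=> nu na nb; have := dvdz_ler n (a - u); have := dvdz_ler n (b - u).
by rewrite !(dvdz_sub_offset _ nu) //; lia.
Qed.

Definition cell_floor (n o x : int) : int := o + ((x - o - 1) %/ n)%Z * n.

Lemma cell_floorP (n o x : int) : 0 < n ->
  (n %| cell_floor n o x - o)%Z /\ cell_floor n o x < x <= cell_floor n o x + n.
Proof.
move=> n_gt0; split; first by rewrite /cell_floor addrC addKr; exact/dvdz_mull/dvdzz.
have := divz_eq (x - o - 1) n; have := modz_ge0 (x - o - 1) (lt0r_neq0 n_gt0).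
by have := ltz_pmod (x - o - 1) n_gt0; rewrite /cell_floor; lia.
Qed.

Lemma find_step (P : nat -> Prop) {m} : P m -> ~ P 0%N -> exists i : 'I_m, P i.+1 /\ ~ P i.
Proof.
elim: m => [//|m IHm] Pm1 nP0.
have [Pm | nPm] := pselect (P m); last by exists ord_max.
by have [i Pi] := IHm Pm nP0; exists (widen_ord (leqnSn m) i).
Qed.

Lemma ltnS_neq {d} (i j : 'I_d) : j != i -> (j < i.+1)%N = (j < i)%N.
Proof. by move=> ne; rewrite ltnS leq_eqVlt (_ : (j == i :> nat) = false) //; apply/negbTE. Qed.

Lemma coordD {d} (a b : Zd d) j : coord (a + b) j = coord a j + coord b j.
Proof. by rewrite /coord mxE. Qed.

Lemma coordB {d} (a b : Zd d) j : coord (a - b) j = coord a j - coord b j.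
Proof. by rewrite /coord !mxE. Qed.

Lemma coord_row {d} (f : 'I_d -> int) j : coord (\row_i f i) j = f j.
Proof. by rewrite /coord mxE. Qed.

Definition supdist_le {d} (n : int) (p q : Zd d) :=
  forall j, `|coord p j - coord q j| <= n.

Definition zboundary {d} (n : int) (S : set (Zd d)) : set (Zd d) :=
  [set p | ~ S p /\ exists2 q, S q & supdist_le n p q].

Lemma zboundary_mono {d} {n m : int} (S : set (Zd d)) p :
  n <= m -> zboundary n S p -> zboundary m S p.
Proof. by move=> nm [nSp [q Sq pq]]; split=> //; exists q => // j; have := pq j; lia. Qed.

Definition cell_box {d} (lo hi : 'I_d -> int) : set (Zd d) := box_of (fun j => lo j + 1) hi.

Lemma cell_boxP {d} (lo hi : 'I_d -> int) v :
  cell_box lo hi v <-> forall j, lo j < coord v j <= hi j.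
Proof. by split=> h j; have := h j => /=; lia. Qed.

Definition kcube {d} (k : int) (o : Zd d) (Q : set (Zd d)) :=
  exists2 lo : 'I_d -> int, (forall j, (k %| lo j - coord o j)%Z) &
                           Q = cell_box lo (fun j => lo j + k).

Lemma kcube_almost_kbox {d} (k : nat) (o : Zd d) Q : kcube k o Q -> almost_kbox k Q.
Proof.
move=> [lo _ ->]; exists (fun j => lo j + 1), (fun j => lo j + k); split=> //.
by split=> [j | i j /eqP[]]; [lia | ring].
Qed.

Lemma kcube_cover {d} (k : int) (o v : Zd d) : 0 < k -> exists2 Q, kcube k o Q & Q v.
Proof.
move=> k_gt0; pose lo j := cell_floor k (coord o j) (coord v j).
have lo_cell j := cell_floorP k (coord o j) (coord v j) k_gt0.
exists (cell_box lo (fun j => lo j + k)); first by exists lo => // j; case: (lo_cell j).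
by apply/cell_boxP => j; case: (lo_cell j).
Qed.

Lemma kcube_uniq {d} (k : int) (o : Zd d) Q Q' w :
  kcube k o Q -> kcube k o Q' -> Q w -> Q' w -> Q = Q'.
Proof.
move=> [lo klo ->] [lo' klo' ->] /cell_boxP Qw /cell_boxP Q'w.
by have -> // : lo = lo'; apply/funext => j; exact: cell_uniq (klo j) (klo' j) (Qw j) (Q'w j).
Qed.

Definition grid_set {d} (M : int) (g : Zd d) (cells : set (Zd d)) : set (Zd d) :=
  [set v | exists2 c, cells c &
     forall j, coord g j + coord c j < coord v j <= coord g j + coord c j + M].

Definition is_grid_set {d} (M : int) (S : set (Zd d)) :=
  exists g cells, (forall c, cells c -> forall j, (M %| coord c j)%Z) /\ S = grid_set M g cells.

Lemma grid_union_grid_set {d} (M : nat) (S : set (Zd d)) : grid_union M S -> is_grid_set M S.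
Proof.
move=> [g [cells [cells_dvd [-> _]]]]; exists g, cells; split=> //.
apply/seteqP; split=> v /= [c].
  move=> [u [cc [hu ->]]]; exists c => // j; have := hu j; rewrite !coordD; lia.
move=> cc hv; exists c, (v - g - c); split=> //; split; last by apply/rowP => j; rewrite !mxE; ring.
by move=> j; have := hv j; rewrite !coordB; lia.
Qed.

Lemma grid_set_shift {d} (M : int) (g h : Zd d) cells :
  [set v | grid_set M g cells (v - h)] = grid_set M (g + h) cells.
Proof.
by apply/seteqP; split=> v [c cc hv]; exists c => // j; have := hv j; rewrite coordB coordD; lia.
Qed.

Definition grid_scales (k M : int) := [/\ 0 < k, (k %| M)%Z & 3 * k < M].

Section Fattening.
Context {d : nat}.
Variables (kn : nat) (M : int) (o g : Zd d) (cells : set (Zd d)).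
Local Notation k := kn%:Z.
Hypothesis scales : grid_scales k M.
Hypothesis cells_dvd : forall c, cells c -> forall j, (M %| coord c j)%Z.

Let k_gt0 : 0 < k. Proof. by case: scales. Qed.
Let k_dvd_M : (k %| M)%Z. Proof. by case: scales. Qed.
Let M_gt3k : 3 * k < M. Proof. by case: scales. Qed.

Definition shift (j : 'I_d) : int := ((coord o j - coord g j) %% k)%Z.

(* Pads chosen so that a padded cell ends on the lattice of offset o
   ([range_aligned]) while each pad is between k and 2k thick. *)
Definition lpad (j : 'I_d) : int := 2 * k - shift j.
Definition upad (j : 'I_d) : int := k + shift j.

Lemma shiftP j : 0 <= shift j < k /\ (k %| coord o j - coord g j - shift j)%Z.
Proof.
rewrite /shift modz_ge0 ?ltz_pmod ?lt0r_neq0 //; split=> //.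
by rewrite {1}(divz_eq (coord o j - coord g j) k) addrK; exact/dvdz_mull/dvdzz.
Qed.

Lemma padsP j :
  k < lpad j <= 2 * k /\ k <= upad j < 2 * k /\ lpad j + upad j = 3 * k.
Proof. by have := shiftP j; rewrite /lpad /upad; lia. Qed.

Definition range_lo (m : nat) (c : Zd d) (j : 'I_d) : int :=
  coord g j + coord c j - (if (j < m)%N then lpad j else 0).
Definition range_hi (m : nat) (c : Zd d) (j : 'I_d) : int :=
  coord g j + coord c j + M + (if (j < m)%N then upad j else 0).

Definition fattening (m : nat) : set (Zd d) :=
  [set v | exists2 c, cells c & forall j, range_lo m c j < coord v j <= range_hi m c j].

Definition lattice_offset (m : nat) (j : 'I_d) : int :=
  if (j < m)%N then coord o j else coord g j.

Lemma range_unpadded m c (j : 'I_d) : (m <= j)%N ->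
  range_lo m c j = coord g j + coord c j /\ range_hi m c j = coord g j + coord c j + M.
Proof. by rewrite /range_lo /range_hi leqNgt => /negbTE ->; rewrite subr0 addr0. Qed.

Lemma range_succ {i j : 'I_d} c : j != i ->
  range_lo i.+1 c j = range_lo i c j /\ range_hi i.+1 c j = range_hi i c j.
Proof. by move=> ne; rewrite /range_lo /range_hi ltnS_neq. Qed.

Lemma fattening0 : fattening 0%N = grid_set M g cells.
Proof.
apply/seteqP; split=> v [c cc hv]; exists c => // j; have := hv j.
all: by have [-> ->] := range_unpadded 0%N c j (leq0n j).
Qed.

Lemma fattening_mono {m m'} : (m <= m')%N -> fattening m `<=` fattening m'.
Proof.
move=> le_mm' v [c cc hv]; exists c => // j; have := hv j; have := padsP j.
rewrite /range_lo /range_hi; case: (ltnP j m) => [/leq_trans/(_ le_mm') -> | _]; first by [].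
by case: ifP; lia.
Qed.

Lemma grid_set_sub_fattening m : grid_set M g cells `<=` fattening m.
Proof. by rewrite -fattening0; exact: fattening_mono. Qed.

Lemma fattening_near m v : fattening m v ->
  exists2 q, grid_set M g cells q & supdist_le (2 * k) v q.
Proof.
move=> [c cc hv]; pose base j := coord g j + coord c j.
pose f j := if coord v j <= base j then base j + 1
            else if coord v j <= base j + M then coord v j else base j + M.
have hf j : base j < f j <= base j + M /\ `|coord v j - f j| <= 2 * k.
  have := hv j; have := padsP j; rewrite /f /range_lo /range_hi -/(base j).
  by case: (j < m)%N; (case: ifP => ?; [|case: ifP => ?]); lia.
exists (\row_j f j); last by move=> j; rewrite coord_row; case: (hf j).
by exists c => // j; rewrite coord_row; case: (hf j).
Qed.

Lemma range_aligned m c j : cells c ->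
  (k %| range_lo m c j - lattice_offset m j)%Z /\
  (k %| range_hi m c j - lattice_offset m j)%Z.
Proof.
move=> cc; have kc := dvdz_trans k_dvd_M (cells_dvd cc j).
have k2k : (k %| 2 * k)%Z by exact/dvdz_mull/dvdzz.
have [_ ks] := shiftP j.
rewrite /range_lo /range_hi /lattice_offset /lpad /upad; case: ifP => _.
  have -> : coord g j + coord c j - (2 * k - shift j) - coord o j =
            coord c j - 2 * k - (coord o j - coord g j - shift j) by ring.
  have -> : coord g j + coord c j + M + (k + shift j) - coord o j =
            coord c j + M + k - (coord o j - coord g j - shift j) by ring.
  by split; apply: rpredB ks; [apply: rpredB | rewrite !rpredD ?dvdzz].
have -> : coord g j + coord c j - 0 - coord g j = coord c j by ring.
have -> : coord g j + coord c j + M + 0 - coord g j = coord c j + M by ring.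
by rewrite rpredD.
Qed.

Lemma range_cell {m c j lo x y} : cells c -> (k %| lo - lattice_offset m j)%Z ->
  lo < x <= lo + k -> lo < y <= lo + k ->
  range_lo m c j < x <= range_hi m c j -> range_lo m c j < y <= range_hi m c j.
Proof.
move=> cc klo; have [klo_r khi_r] := range_aligned m j cc.
exact: cell_sub_interval klo klo_r khi_r.
Qed.

Lemma fattening_kcube_closed m Q v w : (forall j, lattice_offset m j = coord o j) ->
  kcube k o Q -> Q v -> Q w -> fattening m v -> fattening m w.
Proof.
move=> offset_o [lo klo ->] /cell_boxP Qv /cell_boxP Qw [c cc hv].
exists c => // j; apply: (range_cell cc _ (Qv j) (Qw j) (hv j)).
by rewrite offset_o.
Qed.

Definition is_pad (i : 'I_d) (lo hi : int) :=
  exists2 a, (M %| a - coord g i)%Z &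
             (lo = a - lpad i /\ hi = a) \/ (lo = a /\ hi = a + upad i).

Definition ext_box (i : 'I_d) (lo hi : 'I_d -> int) :=
  is_pad i (lo i) (hi i) /\
  forall j, j != i -> hi j = lo j + k /\ (k %| lo j - lattice_offset i j)%Z.

Definition ext_tile (Q : set (Zd d)) :=
  exists (i : 'I_d) (lo hi : 'I_d -> int),
    [/\ Q = cell_box lo hi, ext_box i lo hi, Q `<=` fattening i.+1 &
        forall v, Q v -> ~ fattening i v].

Lemma pad_uniq i lo hi lo' hi' x : is_pad i lo hi -> is_pad i lo' hi' ->
  lo < x <= hi -> lo' < x <= hi' -> lo = lo' /\ hi = hi'.
Proof.
move=> [a ga pad] [a' ga' pad']; have := padsP i.
have := dvdz_small (dvdz_sub_offset ga ga').
by case: pad => -[-> ->]; case: pad' => -[-> ->]; lia.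
Qed.

(* Along i the box lies in one M-cell of S, across i in k-cells to which the
   ranges of F_i are aligned: so F_i meets the box only if it contains v. *)
Lemma ext_box_disjoint i lo hi v : ext_box i lo hi -> cell_box lo hi v ->
  ~ fattening i v -> forall q, cell_box lo hi q -> ~ fattening i q.
Proof.
move=> [[a ga pad] others] /cell_boxP hv nFv q /cell_boxP hq [c cc hc]; apply: nFv.
exists c => // j; case: (eqVneq j i) => [-> | ne]; last first.
  have [hij klo] := others j ne; move: (hq j) (hv j); rewrite hij => hqj hvj.
  exact: range_cell cc klo hqj hvj (hc j).
have [u M_cell [hq_u hv_u]] : exists2 u, (M %| u - coord g i)%Z &
    u < coord q i <= u + M /\ u < coord v i <= u + M.
  have := padsP i; have := hq i; have := hv i.
  case: pad => -[lo_i hi_i]; rewrite lo_i hi_i => *; [exists (a - M) | exists a] => //.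
  - by rewrite addrAC rpredB ?dvdzz.
  - by lia.
  - by lia.
move: (hc i); have [-> ->] := range_unpadded i c i (leqnn i) => hqi.
apply: (cell_sub_interval M_cell _ _ hq_u hv_u hqi).
  have -> : coord g i + coord c i - coord g i = coord c i by ring.
  exact: cells_dvd.
have -> : coord g i + coord c i + M - coord g i = coord c i + M by ring.
by rewrite rpredD ?cells_dvd ?dvdzz.
Qed.

Lemma ext_tile_cover v : fattening d v -> ~ grid_set M g cells v -> exists2 Q, ext_tile Q & Q v.
Proof.
rewrite -fattening0 => Fv nF0v.
have [i [[c cc hc] nFv]] := find_step (fun m => fattening m v) Fv nF0v.
pose A := coord g i + coord c i; pose lower := coord v i <= A.
have v_pad : ~ A < coord v i <= A + M.
  move=> hA; apply: nFv; exists c => // j; case: (eqVneq j i) => [-> | ne].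
    by have [-> ->] := range_unpadded i c i (leqnn i).
  by have [<- <-] := range_succ c ne.
pose lo j := if j == i then (if lower then A - lpad i else A + M)
             else cell_floor k (lattice_offset i j) (coord v j).
pose hi j := if j == i then (if lower then A else A + M + upad i) else lo j + k.
have hi_i : lo i < coord v i <= hi i /\ A - lpad i <= lo i /\ hi i <= A + M + upad i.
  have := hc i; rewrite /range_lo /range_hi ltnSn /lo /hi !eqxx -/A /lower.
  by have := padsP i; case: ifP; lia.
have hi_j j : j != i -> [/\ lo j < coord v j <= lo j + k, hi j = lo j + k &
                          (k %| lo j - lattice_offset i j)%Z].
  move=> ne; rewrite /hi /lo (negbTE ne).
  by have [? ?] := cell_floorP k (lattice_offset i j) (coord v j) k_gt0.
have box : ext_box i lo hi.
  split=> [|j ne]; last by have [] := hi_j j ne.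
  rewrite /lo /hi !eqxx /lower; case: ifP => _; [exists A | exists (A + M)]; try by [left | right].
    have -> : A - coord g i = coord c i by rewrite /A; ring.
    exact: cells_dvd.
  have -> : A + M - coord g i = coord c i + M by rewrite /A; ring.
  by rewrite rpredD ?cells_dvd ?dvdzz.
have Qv : cell_box lo hi v.
  apply/cell_boxP => j; case: (eqVneq j i) => [-> | ne]; first by case: hi_i.
  by case: (hi_j j ne) => ? ->.
exists (cell_box lo hi) => //; exists i, lo, hi; split=> //; last exact: ext_box_disjoint.
move=> q /cell_boxP hq; exists c => // j; case: (eqVneq j i) => [-> | ne].
  by move: (hq i); rewrite /range_lo /range_hi ltnSn; have := padsP i; lia.
have [hvj hij klo] := hi_j j ne; move: (hq j); rewrite hij => hqj.
have [-> ->] := range_succ c ne; apply: range_cell cc klo hvj hqj _.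
by have [<- <-] := range_succ c ne.
Qed.

Lemma ext_tile_uniq Q Q' w : ext_tile Q -> ext_tile Q' -> Q w -> Q' w -> Q = Q'.
Proof.
move=> [i [lo [hi [-> [pad others] sub nF]]]] [i' [lo' [hi' [-> [pad' others'] sub' nF']]]].
move=> Qw Q'w; have ii' : i = i'.
  apply: val_inj; case: (ltngtP i i') => // lt; exfalso.
    exact: nF' w Q'w (fattening_mono lt (sub w Qw)).
  exact: nF w Qw (fattening_mono lt (sub' w Q'w)).
subst i'; move/cell_boxP: Qw => hw; move/cell_boxP: Q'w => hw'.
have lohi j : lo j = lo' j /\ hi j = hi' j.
  case: (eqVneq j i) => [-> | ne]; first exact: pad_uniq pad pad' (hw i) (hw' i).
  have [e kl] := others j ne; have [e' kl'] := others' j ne.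
  move: (hw j) (hw' j); rewrite e e' => hwj hw'j.
  by rewrite (cell_uniq kl kl' hwj hw'j).
have -> : lo = lo' by apply/funext => j; case: (lohi j).
by have -> : hi = hi' by apply/funext => j; case: (lohi j).
Qed.

Lemma ext_tile_sub Q v : ext_tile Q -> Q v -> fattening d v.
Proof. by move=> [i [lo [hi [_ _ sub _]]]] /sub; apply: fattening_mono. Qed.

Lemma ext_tile_not_grid Q v : ext_tile Q -> Q v -> ~ grid_set M g cells v.
Proof.
move=> [i [lo [hi [_ _ _ nF]]]] /nF nFv /(grid_set_sub_fattening i); exact: nFv.
Qed.

Lemma ext_tile_close Q v w : ext_tile Q -> Q v -> Q w -> supdist_le (2 * k) v w.
Proof.
move=> [i [lo [hi [-> [[a _ pad] others] _ _]]]] /cell_boxP hv /cell_boxP hw j.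
move: (hv j) (hw j); case: (eqVneq j i) => [-> | ne].
  by have := padsP i; case: pad => -[-> ->]; lia.
by have [-> _] := others j ne; lia.
Qed.

Lemma ext_tile_almost_kbox Q : ext_tile Q -> almost_kbox kn Q.
Proof.
move=> [i [lo [hi [-> [[a _ pad] others] _ _]]]].
exists (fun j => lo j + 1), hi; split=> //; split.
  move=> j; case: (eqVneq j i) => [-> | ne]; last by have [-> _] := others j ne; lia.
  by have := padsP i; case: pad => -[-> ->]; lia.
have side_k j : hi j - (lo j + 1) + 1 != k -> j = i.
  case: (eqVneq j i) => // ne; have [-> _] := others j ne.
  by rewrite (_ : lo j + k - (lo j + 1) + 1 = k) ?eqxx //; ring.
by move=> j j' /side_k -> /side_k ->.
Qed.

End Fattening.

Lemma tileable_set0 {d} (k : nat) : tileable_by_almost_kboxes k (@set0 (Zd d)).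
Proof. by exists set0; split=> //; split=> //; apply/seteqP; split=> // v [Q []]. Qed.

Section RegionTiling.
Context {d : nat}.
Variables (kn : nat) (M : int) (o : Zd d) (cellsC : set (Zd d)) (holes : set (set (Zd d))).
Local Notation k := kn%:Z.
Local Notation C := (grid_set M o cellsC).
Hypothesis scales : grid_scales k M.
Hypothesis cellsC_dvd : forall c, cellsC c -> forall j, (M %| coord c j)%Z.
Hypothesis holes_grid : forall S, holes S -> is_grid_set M S.
Hypothesis holes_zboundary_sub : forall S, holes S -> zboundary (2 * k) S `<=` C.
Hypothesis holes_zboundary_disjoint : forall S S', holes S -> holes S' -> S <> S' ->
  zboundary (2 * k) S `&` zboundary (2 * k) S' = set0.

(* The tiles of a hole depend on its grid presentation, so fix one. *)
Let grid_rep S : exists gc : Zd d * set (Zd d), holes S ->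
  (forall c, gc.2 c -> forall j, (M %| coord c j)%Z) /\ S = grid_set M gc.1 gc.2.
Proof.
have [/holes_grid [g [cells h]] | nS] := pselect (holes S); first by exists (g, cells).
by exists (0, set0) => /nS.
Qed.

Let offset S := (projT1 (choice grid_rep) S).1.
Let cells S := (projT1 (choice grid_rep) S).2.
Local Notation F S := (fattening kn M o (offset S) (cells S) d).
Local Notation ext_tile S := (ext_tile kn M o (offset S) (cells S)).

Let cells_dvd S : holes S -> forall c, cells S c -> forall j, (M %| coord c j)%Z.
Proof. by move=> hS; case: (projT2 (choice grid_rep) S hS). Qed.

Let hole_grid_set S : holes S -> S = grid_set M (offset S) (cells S).
Proof. by move=> hS; case: (projT2 (choice grid_rep) S hS). Qed.

Let ext_tile_zboundary S Q v : holes S -> ext_tile S Q -> Q v -> zboundary (2 * k) S v.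
Proof.
move=> hS tQ Qv; rewrite [S in zboundary _ S](hole_grid_set hS); split.
  exact: ext_tile_not_grid tQ Qv.
have FSv : F S v by exact: ext_tile_sub tQ Qv.
exact: fattening_near FSv.
Qed.

Definition region := C `\` \bigcup_(S in holes) S.

Let tile Q := Q `<=` region /\
  ((exists2 S, holes S & ext_tile S Q) \/
   (kcube k o Q /\ forall S, holes S -> forall v, Q v -> ~ F S v)).

Let tile_almost_kbox Q : tile Q -> almost_kbox kn Q.
Proof.
move=> [_ [[S hS tQ] | [cQ _]]]; [exact: ext_tile_almost_kbox tQ | exact: kcube_almost_kbox cQ].
Qed.

Let tile_disjoint Q Q' : tile Q -> tile Q' -> Q <> Q' -> Q `&` Q' = set0.
Proof.
move=> [_ tQ] [_ tQ'] neQ; apply/seteqP; split=> // w [Qw Q'w]; apply: neQ.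
case: tQ tQ' => [[S hS tQ] | [cQ nFQ]] [[S' hS' tQ'] | [cQ' nFQ']].
- have [eS | neS] := pselect (S = S'); first by subst S'; exact: ext_tile_uniq tQ tQ' Qw Q'w.
  have := holes_zboundary_disjoint hS hS' neS; rewrite -subset0 => /(_ w); case; split.
    exact: ext_tile_zboundary tQ Qw.
  exact: ext_tile_zboundary tQ' Q'w.
- by case: (nFQ' S hS w Q'w); exact: ext_tile_sub tQ Qw.
- by case: (nFQ S' hS' w Qw); exact: ext_tile_sub tQ' Q'w.
- exact: kcube_uniq cQ cQ' Qw Q'w.
Qed.

Let ext_tile_in_region S Q v : holes S -> ext_tile S Q -> Q v -> region v ->
  Q `<=` region.
Proof.
move=> hS tQ Qv [_ nholes_v] q Qq.
have qS : zboundary (2 * k) S q by exact: ext_tile_zboundary hS tQ Qq.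
split; first exact: holes_zboundary_sub qS.
move=> [S' hS' S'q]; have [eS | neS] := pselect (S = S'); first by subst S'; case: qS.
have := holes_zboundary_disjoint hS hS' neS; rewrite -subset0 => /(_ v); case; split.
  exact: ext_tile_zboundary tQ Qv.
split; first by move=> S'v; apply: nholes_v; exists S'.
by exists q => //; exact: ext_tile_close tQ Qv Qq.
Qed.

Let tile_cover v : region v -> exists2 Q, tile Q & Q v.
Proof.
move=> Rv; have [Cv nholes_v] := Rv.
have [[S hS FSv] | nF] := pselect (exists2 S, holes S & F S v).
  have nSv : ~ grid_set M (offset S) (cells S) v.
    by rewrite -hole_grid_set // => Sv; apply: nholes_v; exists S.
  have [Q tQ Qv] : exists2 Q, ext_tile S Q & Q v.
    by apply: ext_tile_cover FSv nSv => //; exact: cells_dvd.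
  by exists Q => //; split; [exact: ext_tile_in_region tQ Qv Rv | left; exists S].
have [k_gt0 _ _] := scales; have [Q cQ Qv] := kcube_cover k o v k_gt0.
have nFQ S : holes S -> forall u, Q u -> ~ F S u.
  move=> hS u Qu FSu; apply: nF; exists S => //.
  apply: (fattening_kcube_closed scales (cells_dvd hS) v _ cQ Qu Qv FSu) => j.
  by rewrite /lattice_offset ltn_ord.
exists Q => //; split; last by right.
move=> q Qq; split.
  have C_eq : C = fattening kn M o o cellsC 0%N by rewrite fattening0.
  rewrite C_eq; rewrite C_eq in Cv.
  apply: (fattening_kcube_closed scales cellsC_dvd q _ cQ Qv Qq Cv) => j.
  by rewrite /lattice_offset.
move=> [S hS Sq]; apply: (nFQ S hS q Qq).
by rewrite (hole_grid_set hS) in Sq; exact: grid_set_sub_fattening Sq.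
Qed.

Lemma region_tileable : tileable_by_almost_kboxes kn region.
Proof.
exists tile; split; [exact: tile_almost_kbox | split; first exact: tile_disjoint].
apply/seteqP; split=> [v /tile_cover [Q tQ Qv] | v [Q [[sub _] Qv]]]; last exact: sub.
by exists Q.
Qed.

End RegionTiling.

Section OrbitPicture.
Context {dX : measure_display} {X : measurableType dX} {d : nat}.
Variable T : Zd d -> X -> X.
Hypothesis T_action : borel_action T.

Definition picture (x : X) (A : set X) : set (Zd d) := [set v | A (T v x)].

Lemma actB a b x : T (a - b) (T b x) = T a x.
Proof. by have [_ [TD _]] := T_action; rewrite -TD subrK. Qed.

Lemma act_rebase a b x y : T a y = T b x -> y = T (b - a) x.
Proof.
have [T0 [TD _]] := T_action => e.
by rewrite addrC TD -e -TD addNr T0.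
Qed.

Lemma picture_act h x A : picture x A = [set v | picture (T h x) A (v - h)].
Proof. by apply/seteqP; split=> v; rewrite /picture /= actB. Qed.

Lemma on_orbitW (P Q : set (Zd d) -> Prop) A :
  (forall S, P S -> Q S) -> on_orbit T P A -> on_orbit T Q A.
Proof. by move=> PQ [x [orbA PA]]; exists x; split=> //; exact: PQ. Qed.

Lemma component_nonempty B C : component T B C -> exists y, C y.
Proof. by move=> [x [Bx ->]]; exists x; apply: pconn_refl. Qed.

Lemma picture_grid_set (M : nat) x y A : on_orbit T (grid_union M) A ->
  A y -> (exists h, y = T h x) -> is_grid_set M%:Z (picture x A).
Proof.
move=> [xA [orbA /grid_union_grid_set [g [cells [cells_dvd eA]]]]] Ay [b yx].
have [a yxA] := orbA y Ay.
have xA_def : xA = T (b - a) x by apply: act_rebase; rewrite -yxA.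
exists (g + (b - a)), cells; split=> //.
by rewrite (picture_act (b - a)) -xA_def [picture xA A]eA grid_set_shift.
Qed.

Lemma zboundary_picture (n : nat) x A :
  zboundary n%:Z (picture x A) `<=` picture x (boundary T n A).
Proof.
move=> p [nAp [q Aq pq]]; split=> //; exists (p - q), (T q x).
by split=> [j | ]; [rewrite coordB; exact: pq | rewrite actB].
Qed.

Lemma picture_zboundary_disjoint (n : nat) (m : int) x A A' : m <= n%:Z ->
  boundary T n A `&` boundary T n A' = set0 ->
  zboundary m (picture x A) `&` zboundary m (picture x A') = set0.
Proof.
rewrite -!subset0 => mn disj p [pA pA']; apply: (disj (T p x)).
by split; apply: zboundary_picture; exact: zboundary_mono mn _.
Qed.

Lemma picture_zboundary_sub (n : nat) (m : int) x A A' : m <= n%:Z -> A `<=` A' ->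
  boundary T n A `&` boundary T n A' = set0 -> zboundary m (picture x A) `<=` picture x A'.
Proof.
rewrite -subset0 => mn AA' disj p pA; apply: contrapT => nA'p.
have [_ [q Aq pq]] := zboundary_mono mn pA.
apply: (disj (T p x)); split; apply: zboundary_picture.
  exact: zboundary_mono mn pA.
by split=> //; exists q => //; exact: AA'.
Qed.

End OrbitPicture.

Unset Implicit Arguments.

Theorem lemma6p2
  (N k : nat) (hN : (10 <= N)%N) (hk : (10 <= k)%N)
  (d : nat) (hd : (1 < d)%N)
  (dX : measure_display) (X : measurableType dX) (hX : standard_borel X)
  (T : Zd d -> X -> X) (hT : borel_action T) (hfree : free_action T)
  (delta : Rr) (hdelta : 0 < delta < 1)
  (r : nat -> nat) (hr_incr : forall l, (r l < r l.+1)%N)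
  (hr_sum : forall l, 24 * (\sum_(j < l) r j)%N%:R < delta * (r l)%:R)
  (hr_first : (20 * k)%:R + (12 * N * k)%:R / delta < (r 0)%:R :> Rr)
  (B : nat -> set X) (hBmeas : forall j, measurable (B j))
  (h_i : forall j C, component T (B j) C ->
           on_orbit T (fun S => coconnected S /\ grid_union (N * k) S /\
                                almost_cube (1 + delta) (r j) S) C)
  (h_ii : forall x, exists i, B i x)
  (h_iii : forall i j C D, component T (B i) C -> component T (B j) D -> C <> D ->
             boundary T (10 * k) C `&` boundary T (10 * k) D = set0) :
  forall i C, component T (B i) C ->
    on_orbit T (tileable_by_almost_kboxes k)
      (C `\` [set x | exists D, (exists j, (j < i)%N /\ component T (B j) D) /\
                                D `<=` C /\ D x]).
Proof.
move=> i C compC; have [xC [orbC [_ [guC _]]]] := h_i i C compC.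
pose earlier D := (exists j, (j < i)%N /\ component T (B j) D) /\ D `<=` C.
exists xC; split; first by move=> y [/orbC].
have -> : [set v | (C `\` [set x | exists D, (exists j, (j < i)%N /\ component T (B j) D) /\
                                D `<=` C /\ D x]) (T v xC)] =
          picture T xC C `\` \bigcup_(S in picture T xC @` earlier) S.
  apply/seteqP; split=> v [Cv nU]; split=> // U; apply: nU.
    by case: U => _ [D [Dj DC] <-] Dv; exists D.
  by case: U => D [Dj [DC Dv]]; exists (picture T xC D) => //; exists D.
have [[D eD eDC] | neC] := pselect (exists2 D, earlier D & D = C).
  rewrite (_ : _ `\` _ = set0); first exact: tileable_set0.
  by apply/seteqP; split=> // v [Cv []]; exists (picture T xC C) => //; exists D => //; rewrite eDC.
have [gC [cellsC [cellsC_dvd eC]]] := grid_union_grid_set guC.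
rewrite [picture T xC C]eC; apply: region_tileable cellsC_dvd _ _ _.
- split; [lia | rewrite PoszM; exact/dvdz_mull/dvdzz | nia].
- move=> _ [D [[j [_ compD]] DC] <-]; have [y Dy] := component_nonempty compD.
  apply: (picture_grid_set hT xC _ Dy (orbC _ (DC _ Dy))).
  by apply: on_orbitW (h_i j D compD) => S [_ []].
- move=> _ [D eD <-]; have [[j [_ compD]] DC] := eD; rewrite -eC.
  apply: (picture_zboundary_sub hT (n := 10 * k)) DC _; first lia.
  by apply: h_iii compD compC _ => eDC; apply: neC; exists D.
- move=> _ _ [D [[j [_ compD]] _] <-] [D' [[j' [_ compD']] _] <-] neS.
  apply: (picture_zboundary_disjoint hT (n := 10 * k)); first lia.
  by apply: h_iii compD compD' _ => eD; apply: neS; rewrite eD.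
Qed.
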